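(* Let $G=(V,E)$ be a graph that is $M$-connected in $\mathbb{R}^d$. Then $G$ is $M$-connected in $\mathbb{R}^{d'}$ for all $1\leq d'\leq d$.
   Context: For $p:V\to\mathbb{R}^k$ the rigidity matrix $R(G,p)$ is the $|E|\times k|V|$ matrix whose row for edge $uv$ has $p(u)-p(v)$ in the columns of $u$, $p(v)-p(u)$ in the columns of $v$, zeros elsewhere. The $k$-dimensional rigidity matroid $\mathcal{R}_k(G)$ on $E$ is defined by linear independence of rows of $R(G,p)$ for $p$ generic (coordinates algebraically independent over $\mathbb{Q}$). $G$ is $M$-connected in $\mathbb{R}^k$ if $\mathcal{R}_k(G)$ is connected, i.e.\ any two distinct edges lie in a common circuit of $\mathcal{R}_k(G)$. *)

From HB Require Import structures.
From mathcomp Require Import all_boot all_order all_algebra.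
From mathcomp Require Import mpoly.
From Stdlib Require Rdefinitions.
From mathcomp Require Import Rstruct.
Notation R := Rdefinitions.R.

Set Implicit Arguments.
Unset Strict Implicit.
Unset Printing Implicit Defensive.

Import GRing.Theory Num.Theory.
Local Open Scope ring_scope.

Definition simple_graph (V : finType) (E : {set {set V}}) : Prop :=
  forall e, e \in E -> #|e| = 2%N.

Definition alg_indep_Q (I : finType) (x : I -> R) : Prop :=
  forall P : mpoly.mpoly #|I| rat, P != 0 ->
    mpoly.mmap (@ratr R) (fun j : 'I_#|I| => x (enum_val j)) P != 0.

Definition generic (V : finType) (k : nat) (p : V -> 'I_k -> R) : Prop :=
  alg_indep_Q (fun vi : V * 'I_k => p vi.1 vi.2).

(* Entry of the rigidity matrix R(G,p) in row e = {u,v} and column (w,i):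
   for w = u it is p(u)_i - p(v)_i, for w = v it is p(v)_i - p(u)_i,
   and 0 if w is not an endpoint of e.  (For w in e = {u,v} the sum below
   equals (p w i - p w i) + (p w i - p x i) with x the other endpoint.) *)
Definition rig_entry (V : finType) (k : nat) (p : V -> 'I_k -> R)
    (e : {set V}) (w : V) (i : 'I_k) : R :=
  if w \in e then \sum_(x in e) (p w i - p x i) else 0.

Definition rows_indep (V : finType) (k : nat) (p : V -> 'I_k -> R)
    (F : {set {set V}}) : Prop :=
  forall c : {set V} -> R,
    (forall (w : V) (i : 'I_k), \sum_(e in F) c e * rig_entry p e w i = 0) ->
    forall e, e \in F -> c e = 0.

Definition rig_indep (V : finType) (k : nat) (F : {set {set V}}) : Prop :=
  forall p : V -> 'I_k -> R, generic p -> rows_indep p F.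

Definition rig_circuit (V : finType) (k : nat) (E C : {set {set V}}) : Prop :=
  [/\ C \subset E, ~ rig_indep k C &
      forall C' : {set {set V}}, C' \proper C -> rig_indep k C'].

Definition M_connected (V : finType) (k : nat) (E : {set {set V}}) : Prop :=
  forall e f, e \in E -> f \in E -> e != f ->
    exists C, rig_circuit k E C /\ e \in C /\ f \in C.

(* Take a circuit C of R_d(G) through e and f, a generic p : V -> R^d and a
   linear relation w among the rows of R(G,p) whose support is exactly C.
   Let A be the set of edges of C joined to e by an R_d'-circuit inside C.
   Since connectivity in a matroid is transitive, every R_d'-circuit inside C
   that meets A lies in A; decomposing w into circuit relations then shows
   that the restriction w|A is still a linear relation for every generic
   realization in R^d', in particular for each projection of p onto d' of its
   coordinates.  These projections cover all coordinates, so w|A is a linear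
   relation for p itself, and minimality of C forces A = C, i.e. f \in A.
   Genericity enters through the Gram determinant of the rows, a polynomial in
   the coordinates, which makes independence the same at all generic points. *)

From mathcomp Require Import all_boot all_order all_algebra.
From mathcomp Require Import mpoly Rstruct boolp.

Set Implicit Arguments.
Unset Strict Implicit.
Unset Printing Implicit Defensive.
Import GRing.Theory Num.Theory.
Local Open Scope ring_scope.

Section LinearMatroid.
Variables (K : fieldType) (T : finType) (J : Type) (r : T -> J -> K).
Implicit Types (c : T -> K) (A C D F : {set T}).

Definition linrel c := forall j, \sum_t c t * r t j = 0.
Definition supp c := [set t | c t != 0].
Definition indep F :=
  forall c, (forall j, \sum_(t in F) c t * r t j = 0) -> {in F, forall t, c t = 0}.
Definition circuit D := ~ indep D /\ forall D', D' \proper D -> indep D'.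
Definition restr A c t := if t \in A then c t else 0.
Definition pivot c c' y t := c t - c y / c' y * c' t.

Lemma eq_linrel c c' : c =1 c' -> linrel c -> linrel c'.
Proof. by move=> eqc hc j; rewrite -[RHS](hc j); apply: eq_bigr => t _; rewrite eqc. Qed.

Lemma linrel_comb a c c' : linrel c -> linrel c' -> linrel (fun t => c t + a * c' t).
Proof.
move=> hc hc' j; under eq_bigr => t _ do rewrite mulrDl -mulrA.
by rewrite big_split /= -mulr_sumr hc hc' mulr0 addr0.
Qed.

Lemma linrel_pivot c c' y : linrel c -> linrel c' -> linrel (pivot c c' y).
Proof.
move=> hc hc'; apply: eq_linrel (linrel_comb (- (c y / c' y)) hc hc') => t.
by rewrite /pivot mulNr.
Qed.

Lemma supp_pivot c c' y : c' y != 0 ->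
  supp (pivot c c' y) \subset (supp c :|: supp c') :\ y.
Proof.
move=> c'y; apply/subsetP => t; rewrite !inE /pivot.
have [->|_] /= := eqVneq t y; first by rewrite divfK // subrr eqxx.
by rewrite -negb_and; apply: contra => /andP [/eqP -> /eqP ->]; rewrite mulr0 subrr.
Qed.

Lemma supp_restr A c : supp (restr A c) = supp c :&: A.
Proof.
by apply/setP => t; rewrite !inE /restr; case: (t \in A); rewrite ?eqxx ?andbT ?andbF.
Qed.

Lemma sum_restr A c j : \sum_t restr A c t * r t j = \sum_(t in A) c t * r t j.
Proof.
by rewrite [RHS]big_mkcond; apply: eq_bigr => t _; rewrite /restr; case: ifP; rewrite ?mul0r.
Qed.

Lemma restr_supp A c : supp c \subset A -> restr A c =1 c.
Proof.
move=> /subsetP cA t; rewrite /restr; case: ifPn => // tA.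
by apply/esym/eqP; apply: contraNT tA => ct; apply: cA; rewrite inE.
Qed.

Lemma indepP F : indep F <-> forall c, linrel c -> supp c \subset F -> supp c = set0.
Proof.
split=> [hF c hc cF | hF c hc t tF].
  have hcF j : \sum_(t in F) c t * r t j = 0.
    by rewrite -sum_restr -[RHS](hc j); apply: eq_bigr => t _; rewrite restr_supp.
  apply/setP => t; rewrite inE in_set0; apply/negbTE/negP => ct.
  have tF : t \in F by apply: (subsetP cF); rewrite inE.
  by rewrite (hF c hcF t tF) eqxx in ct.
have := hF (restr F c) (fun j => etrans (sum_restr F c j) (hc j)).
rewrite supp_restr subsetIr => /(_ isT) /setP /(_ t).
by rewrite !inE tF andbT => /negbFE /eqP.
Qed.

Lemma dependent_linrel F : ~ indep F ->
  exists2 c, linrel c & supp c \subset F /\ supp c != set0.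
Proof.
move=> depF; apply: contrapT => none; apply: depF; apply/indepP => c hc cF.
by apply/eqP; apply: contrapT => c0; apply: none; exists c => //; split => //; apply/negP.
Qed.

Lemma circuit_sub_eq D1 D2 : circuit D1 -> circuit D2 -> D1 \subset D2 -> D1 = D2.
Proof.
move=> [dep1 _] [_ min2] sub12; apply/eqP; rewrite eqEproper sub12 /=.
by apply: contraT => /negbNE /min2.
Qed.

Lemma circuit_linrel D : circuit D -> exists2 c, linrel c & supp c = D.
Proof.
move=> [depD minD]; have [c hc [cD c0]] := dependent_linrel depD.
exists c => //; apply/eqP; rewrite eqEproper cD /=; apply/negP => /minD /indepP.
by move=> /(_ c hc (subxx _)) /eqP; apply/negP.
Qed.

Lemma circuit_in_supp c x : linrel c -> x \in supp c ->
  exists2 D, circuit D & x \in D /\ D \subset supp c.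
Proof.
move: {2}#|supp c|.+1 (ltnSn #|supp c|) => n.
elim: n c => // n IH c ltcn hc xc.
have [circ_c | not_circ_c] := pselect (circuit (supp c)); first by exists (supp c).
have dep_c : ~ indep (supp c).
  by move/indepP/(_ c hc (subxx _))/setP/(_ x); rewrite xc in_set0.
have [D' ltD' depD'] : exists2 D' : {set T}, D' \proper supp c & ~ indep D'.
  apply: contrapT => none; apply: not_circ_c; split=> // D' ltD'.
  by apply: contrapT => depD'; apply: none; exists D'.
have [c' hc' [c'D' c'0]] := dependent_linrel depD'.
have lt_c' := sub_proper_trans c'D' ltD'.
have [xc'|xc'] := boolP (x \in supp c').
  have [D cD [xD Dc']] := IH c' (leq_trans (proper_card lt_c') ltcn) hc' xc'.
  by exists D => //; split => //; apply: subset_trans Dc' (proper_sub lt_c').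
(* eliminate an element y of supp c' from c; x survives since c' x = 0 *)
have [y yc'] := set0Pn _ c'0; have c'y : c' y != 0 by rewrite inE in yc'.
have sub_piv : supp (pivot c c' y) \subset supp c :\ y.
  apply: subset_trans (supp_pivot c c'y) _; apply: setSD.
  by rewrite subUset subxx (proper_sub lt_c').
have lt_piv : (#|supp (pivot c c' y)| < #|supp c|)%N.
  by apply/proper_card/(sub_proper_trans sub_piv)/properD1/(subsetP (proper_sub lt_c')).
have x_piv : x \in supp (pivot c c' y).
  by move: xc' xc; rewrite !inE /pivot => /negbNE /eqP ->; rewrite mulr0 subr0.
have [D cD [xD Dpiv]] := IH _ (leq_trans lt_piv ltcn) (linrel_pivot y hc hc') x_piv.
by exists D => //; split => //; apply: subset_trans Dpiv (subset_trans sub_piv (subD1set _ _)).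
Qed.

Lemma circuit_elim D1 D2 x z : circuit D1 -> circuit D2 ->
  x \in D1 -> x \in D2 -> z \in D1 -> z \notin D2 ->
  exists2 D, circuit D & z \in D /\ D \subset (D1 :|: D2) :\ x.
Proof.
move=> cD1 cD2; have [c1 hc1 <-] := circuit_linrel cD1.
have [c2 hc2 <-] := circuit_linrel cD2; move=> xD1 xD2 zD1 zD2.
have c2x : c2 x != 0 by rewrite inE in xD2.
have z_piv : z \in supp (pivot c1 c2 x).
  by move: zD2 zD1; rewrite !inE /pivot => /negbNE /eqP ->; rewrite mulr0 subr0.
have [D cD [zD Dpiv]] := circuit_in_supp (linrel_pivot x hc1 hc2) z_piv.
by exists D => //; split => //; apply: subset_trans Dpiv (supp_pivot c1 c2x).
Qed.

Lemma circuit_trans D1 D2 e h : circuit D1 -> circuit D2 -> e \in D1 -> h \in D2 ->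
  D1 :&: D2 != set0 ->
  exists2 D, circuit D & [/\ e \in D, h \in D & D \subset D1 :|: D2].
Proof.
move=> cD1; move: {2}#|D2 :\: D1|.+1 (ltnSn #|D2 :\: D1|) => n.
elim: n D2 => // n IH D2 ltn cD2 eD1 hD2 /set0Pn [x /setIP [xD1 xD2]].
have [eD2|eD2] := boolP (e \in D2); first by exists D2; rewrite ?subsetUr.
have [D3 cD3 [eD3 D3sub]] := circuit_elim cD1 cD2 xD1 xD2 eD1 eD2.
have D3D12 : D3 \subset D1 :|: D2 := subset_trans D3sub (subD1set _ _).
have [hD3|hD3] := boolP (h \in D3); first by exists D3.
(* D3 leaves D1: otherwise the circuit D3 would be D1, yet x \in D1 and x \notin D3 *)
have [y yD3 yD1] : exists2 y, y \in D3 & y \notin D1.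
  apply/subsetPn; apply: contraT => /negbNE D3D1.
  have xD3 : x \in D3 by rewrite (circuit_sub_eq cD3 cD1 D3D1).
  by move/subsetP: D3sub => /(_ x xD3); rewrite !inE eqxx.
have yD2 : y \in D2.
  by move/subsetP: D3D12 => /(_ y yD3) /setUP [yD1'|//]; rewrite yD1' in yD1.
have [D4 cD4 [hD4 D4sub]] := circuit_elim cD2 cD3 yD2 yD3 hD2 hD3.
have D4sub' : D4 \subset (D1 :|: D2) :\ y.
  by apply: subset_trans D4sub _; apply: setSD; rewrite subUset subsetUr.
have yD4 : y \notin D4 by apply/negP => /(subsetP D4sub'); rewrite !inE eqxx.
have meet : D1 :&: D4 != set0.
  apply: contraT => /negbNE /eqP D14.
  suff D4D2 : D4 \subset D2 by rewrite (circuit_sub_eq cD4 cD2 D4D2) yD2 in yD4.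
  apply/subsetP => z zD4; move/subsetP: D4sub' => /(_ z zD4) /setD1P [_ /setUP [zD1|//]].
  by move/setP: D14 => /(_ z); rewrite !inE zD1 zD4.
have lt4 : (#|D4 :\: D1| < #|D2 :\: D1|)%N.
  apply/proper_card/(@sub_proper_trans _ _ ((D2 :\: D1) :\ y)).
    apply/subsetP => z /setDP [zD4 zD1]; move/subsetP: D4sub' => /(_ z zD4).
    by rewrite !inE (negbTE zD1).
  by apply: properD1; rewrite inE yD1 yD2.
have [D cD [eD hD DD14]] := IH D4 (leq_trans lt4 ltn) cD4 eD1 hD4 meet.
exists D => //; split => //; apply: subset_trans DD14 _.
by rewrite subUset subsetUl (subset_trans D4sub' (subD1set _ _)).
Qed.

Definition circuit_closed C A :=
  forall D, circuit D -> D \subset C -> D :&: A != set0 -> D \subset A.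

Lemma linrel_restr_trivial A c : linrel c ->
  supp c :&: A = set0 \/ supp c \subset A -> linrel (restr A c).
Proof.
move=> hc [cA | cA]; last exact: eq_linrel (fun t => esym (restr_supp cA t)) hc.
move=> j; rewrite sum_restr big1 // => t tA.
suff -> : c t = 0 by rewrite mul0r.
by apply/eqP; apply: contraT => ct; move/setP: cA => /(_ t); rewrite !inE ct tA.
Qed.

Lemma linrel_restr C A c : circuit_closed C A -> linrel c -> supp c \subset C ->
  linrel (restr A c).
Proof.
move=> clA; move: {2}#|supp c|.+1 (ltnSn #|supp c|) => n.
elim: n c => // n IH c ltcn hc cC.
have [c0 | /set0Pn [x xc]] := eqVneq (supp c) set0.
  by apply: linrel_restr_trivial hc _; left; rewrite c0 set0I.
have [D cD [xD Dc]] := circuit_in_supp hc xc.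
have [c' hc' c'D] := circuit_linrel cD.
have c'x : c' x != 0 by rewrite -c'D inE in xD.
have sub_piv : supp (pivot c c' x) \subset supp c :\ x.
  by apply: subset_trans (supp_pivot c c'x) _; apply: setSD; rewrite subUset subxx c'D Dc.
have lt_piv : (#|supp (pivot c c' x)| < #|supp c|)%N.
  exact/proper_card/(sub_proper_trans sub_piv)/properD1.
have piv_restr := IH _ (leq_trans lt_piv ltcn) (linrel_pivot x hc hc')
  (subset_trans sub_piv (subset_trans (subD1set _ _) cC)).
have c'_restr : linrel (restr A c').
  apply: linrel_restr_trivial hc' _; rewrite c'D.
  have [DA | DA] := eqVneq (D :&: A) set0; [by left | right].
  exact: clA cD (subset_trans Dc cC) DA.
apply: eq_linrel (linrel_comb (c x / c' x) piv_restr c'_restr) => t.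
by rewrite /restr /pivot; case: ifP => _; rewrite ?mulr0 ?addr0 ?subrK.
Qed.

End LinearMatroid.

Section Gram.
Variables (T J : finType) (F : {set T}).

Definition rowsmx (S : Type) (r : T -> J -> S) : 'M[S]_(#|F|, #|J|) :=
  \matrix_(a, b) r (enum_val a) (enum_val b).

Definition gram (S : pzRingType) (r : T -> J -> S) : 'M[S]_#|F| :=
  rowsmx r *m (rowsmx r)^T.

Lemma indep_rowsmx (K : fieldType) (r : T -> J -> K) :
  indep r F <-> forall v : 'rV_#|F|, v *m rowsmx r = 0 -> v = 0.
Proof.
have mulE (c : T -> K) j : \sum_(t in F) c t * r t j =
    ((\row_a c (enum_val a)) *m rowsmx r) 0 (enum_rank j).
  by rewrite big_enum_val !mxE; apply: eq_bigr => a _; rewrite !mxE enum_rankK.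
split=> [hF v hv | hv c hc t tF].
  pose c t := \sum_(a | enum_val a == t) v 0 a.
  have cE a : c (enum_val a) = v 0 a.
    by rewrite /c (big_pred1 a) // => b; rewrite /= (inj_eq enum_val_inj).
  have vE : \row_a c (enum_val a) = v by apply/rowP => a; rewrite mxE cE.
  apply/rowP => a; rewrite mxE -cE; apply: hF (enum_valP a) => j.
  by rewrite mulE vE hv mxE.
have v0 : \row_(a < #|F|) c (enum_val a) = 0.
  by apply: hv; apply/rowP => b; rewrite -[b]enum_valK -mulE hc mxE.
by move/rowP: v0 => /(_ (enum_rank_in tF t)); rewrite !mxE enum_rankK_in.
Qed.

Lemma mulmx_tr_eq0 (K : realFieldType) n (u : 'rV[K]_n) : u *m u^T = 0 -> u = 0.
Proof.
move=> /matrixP /(_ 0 0); rewrite !mxE => sq0; apply/rowP => j; rewrite mxE.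
have /psumr_eq0P sq : \sum_j u 0 j ^+ 2 = 0.
  by rewrite -[RHS]sq0; apply: eq_bigr => i _; rewrite mxE.
by apply/eqP; rewrite -sqrf_eq0; apply/eqP/sq => // i _; apply: sqr_ge0.
Qed.

Lemma indep_gram (K : realFieldType) (r : T -> J -> K) :
  indep r F <-> \det (gram r) != 0.
Proof.
rewrite indep_rowsmx; split=> [indepM | det_gram v hv].
  apply/negP => /det0P [v v0 hv]; move/negP: v0; apply; apply/eqP/indepM/mulmx_tr_eq0.
  by rewrite trmx_mul mulmxA -(mulmxA v) hv mul0mx.
apply/eqP; apply: contraNT det_gram => v0; apply/det0P; exists v => //.
by rewrite /gram mulmxA hv mul0mx.
Qed.

Lemma map_gram (S S' : pzRingType) (f : {rmorphism S -> S'}) (r : T -> J -> S) :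
  map_mx f (gram r) = gram (fun t j => f (r t j)).
Proof.
by rewrite /gram map_mxM -map_trmx; congr (_ *m _^T); apply/matrixP => a b; rewrite !mxE.
Qed.

Lemma indep_gram_inj (S : pzRingType) (K : realFieldType) (f : {rmorphism S -> K})
    (r : T -> J -> S) :
  injective f -> indep (fun t j => f (r t j)) F <-> \det (gram r) != 0.
Proof. by move=> finj; rewrite indep_gram -map_gram det_map_mx raddf_eq0. Qed.

End Gram.

Lemma eq_mmap n (A S : nzRingType) (f : A -> S) (h1 h2 : 'I_n -> S) (P : {mpoly A[n]}) :
  h1 =1 h2 -> mmap f h1 P = mmap f h2 P.
Proof. by move=> eqh; apply: eq_bigr => m _; rewrite (mmap1_eq _ eqh). Qed.

Lemma mmap_comp_mpoly n k (A : nzRingType) (S : comNzRingType) (f : {rmorphism A -> S})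
    (x : 'I_k -> S) (lq : n.-tuple {mpoly A[k]}) (P : {mpoly A[n]}) :
  mmap f x (P \mPo lq) = mmap f (fun i => mmap f x (tnth lq i)) P.
Proof.
rewrite comp_mpolyEX [in RHS](mpolyE P) !raddf_sum /=.
apply: eq_bigr => m _; rewrite !mmapZ mmapX comp_mpolyX rmorph_prod /mmap1.
by congr (_ * _); apply: eq_bigr => i _; rewrite rmorphXn.
Qed.

Lemma comp_mpoly_rename_eq0 n m (A : comNzRingType) (s : 'I_n -> 'I_m) (P : {mpoly A[n]}) :
  injective s -> P \mPo [tuple 'X_(s i) | i < n] = 0 -> P = 0.
Proof.
move=> sinj P0.
(* substituting along lb undoes the renaming *)
pose lb := [tuple (if [pick i | s i == j] is Some i then 'X_i else 0) : {mpoly A[n]}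
            | j < m].
rewrite -[P]comp_mpoly_id -[RHS](comp_mpoly0 lb) -P0 /comp_mpoly mmap_comp_mpoly.
apply: eq_mmap => i; rewrite !tnth_map !tnth_ord_tuple mmapX mmap1U tnth_map tnth_ord_tuple.
case: pickP => [i' /eqP /sinj -> // | none]; by have := none i; rewrite eqxx.
Qed.

Lemma alg_indep_Q_inj (I : finType) (x : I -> R) :
  alg_indep_Q x -> injective (mmap (@ratr R) (fun j : 'I_#|I| => x (enum_val j))).
Proof. by move=> xind; apply: raddf_inj => P /eqP; apply: contraTeq; apply: xind. Qed.

Lemma alg_indep_Q_comp (I I' : finType) (s : I' -> I) (x : I -> R) :
  injective s -> alg_indep_Q x -> alg_indep_Q (x \o s).
Proof.
move=> sinj xind P P0.
pose sigma (j : 'I_#|I'|) := enum_rank (s (enum_val j)).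
have sigma_inj : injective sigma by move=> j j' /enum_rank_inj /sinj /enum_val_inj.
have -> : mmap (@ratr R) (fun j => (x \o s) (enum_val j)) P =
    mmap (@ratr R) (fun i => x (enum_val i)) (P \mPo [tuple 'X_(sigma j) | j < #|I'|]).
  rewrite mmap_comp_mpoly; apply: eq_mmap => j.
  by rewrite tnth_map tnth_ord_tuple mmapX mmap1U enum_rankK.
by apply: xind; apply: contra P0 => /eqP /(comp_mpoly_rename_eq0 sigma_inj) ->.
Qed.

Lemma generic_comp (V : finType) k k' (s : 'I_k' -> 'I_k) (p : V -> 'I_k -> R) :
  injective s -> generic p -> generic (fun v i => p v (s i)).
Proof.
move=> sinj; apply: (@alg_indep_Q_comp _ _ (fun vi : V * 'I_k' => (vi.1, s vi.2))).
by move=> [v i] [v' i'] [/= -> /sinj ->].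
Qed.

Section Rigidity.
Variable V : finType.
Implicit Types (E C D : {set {set V}}) (e : {set V}).

Definition rig_rows k (p : V -> 'I_k -> R) e (wi : V * 'I_k) : R :=
  rig_entry p e wi.1 wi.2.

Lemma rows_indepE k (p : V -> 'I_k -> R) C : rows_indep p C <-> indep (rig_rows p) C.
Proof.
split=> indepC c hc; apply: indepC; first by move=> w i; apply: (hc (w, i)).
by case=> w i; apply: hc.
Qed.

Definition rig_poly k e (wi : V * 'I_k) : {mpoly rat[#|{: V * 'I_k}|]} :=
  if wi.1 \in e then \sum_(x in e) ('X_(enum_rank wi) - 'X_(enum_rank (x, wi.2))) else 0.

Lemma rig_rowsE k (p : V -> 'I_k -> R) : rig_rows p =
  fun e wi => mmap (@ratr R) (fun j => p (enum_val j).1 (enum_val j).2) (rig_poly e wi).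
Proof.
apply: funext => e; apply: funext => -[w i]; rewrite /rig_rows /rig_entry /rig_poly /=.
case: ifP => _; rewrite ?rmorph0 // rmorph_sum; apply: eq_bigr => x _.
by rewrite rmorphB /= !mmapX !mmap1U !enum_rankK.
Qed.

Lemma indep_rig_generic k (p : V -> 'I_k -> R) C : generic p ->
  indep (rig_rows p) C <-> \det (gram C (@rig_poly k)) != 0.
Proof. by move=> gp; rewrite rig_rowsE; apply: indep_gram_inj; apply: alg_indep_Q_inj gp. Qed.

Lemma rig_indepE k (p : V -> 'I_k -> R) C : generic p ->
  rig_indep k C <-> indep (rig_rows p) C.
Proof.
move=> gp; split=> [/(_ p gp) /rows_indepE // | indep_p q gq].
by apply/rows_indepE/(indep_rig_generic _ gq)/(indep_rig_generic _ gp).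
Qed.

Lemma rig_circuitE k (p : V -> 'I_k -> R) E D : generic p ->
  rig_circuit k E D <-> D \subset E /\ circuit (rig_rows p) D.
Proof.
move=> gp; split=> [[DE depD minD] | [DE [depD minD]]].
  by split=> //; split=> [/(rig_indepE _ gp) | D' /minD /(rig_indepE _ gp)].
by split=> // [/(rig_indepE _ gp) | D' /minD /(rig_indepE _ gp)].
Qed.

Definition component k E C e : {set {set V}} :=
  [set g in C | `[< g = e \/
     exists2 D, rig_circuit k E D & [/\ D \subset C, e \in D & g \in D] >]].

Lemma component_closed k (p : V -> 'I_k -> R) E C e : generic p -> C \subset E ->
  circuit_closed (rig_rows p) C (component k E C e).
Proof.
move=> gp CE D cD DC /set0Pn [g /setIP [gD]]; rewrite inE => /andP [_ /asboolP linked_g].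
apply/subsetP => h hD; rewrite inE (subsetP DC h hD); apply/asboolP; right.
case: linked_g => [<- | [D' rcD' [D'C eD' gD']]].
  by exists D => //; apply/(rig_circuitE _ _ gp); rewrite (subset_trans DC CE).
have [_ cD'] := (rig_circuitE _ _ gp).1 rcD'.
have meet : D' :&: D != set0 by apply/set0Pn; exists g; rewrite inE gD' gD.
have [D'' cD'' [eD'' hD'' D''sub]] := circuit_trans cD' cD eD' hD meet.
have D''C : D'' \subset C by apply: subset_trans D''sub _; rewrite subUset D'C DC.
by exists D''; first by apply/(rig_circuitE _ _ gp); rewrite (subset_trans D''C CE).
Qed.

Lemma window_cover d d' (i : 'I_d) : (0 < d')%N -> (d' <= d)%N ->
  exists2 s : 'I_d' -> 'I_d, injective s & exists j, s j = i.
Proof.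
move=> d'0 d'd; have d0 : (0 < d)%N := leq_trans d'0 d'd.
exists (fun j => Ordinal (ltn_pmod (j + i) d0)).
  move=> j1 j2 /(congr1 val) /= /eqP; rewrite eqn_modDr.
  by rewrite !modn_small ?(leq_trans (ltn_ord _) d'd) // => /eqP /val_inj.
by exists (Ordinal d'0); apply/val_inj; rewrite /= add0n modn_small.
Qed.

Lemma linrel_restr_component d d' (p : V -> 'I_d -> R) E C e c :
  (0 < d')%N -> (d' <= d)%N -> generic p -> C \subset E ->
  linrel (rig_rows p) c -> supp c \subset C ->
  linrel (rig_rows p) (restr (component d' E C e) c).
Proof.
move=> d'0 d'd gp CE hc cC [w i].
have [s sinj [j <-]] := window_cover i d'0 d'd.
have hcs : linrel (rig_rows (fun v l => p v (s l))) c by move=> [v l]; apply: hc (v, s l).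
exact: linrel_restr (component_closed (e := e) (generic_comp sinj gp) CE) hcs cC (w, j).
Qed.

End Rigidity.

Theorem theorem5p1 (V : finType) (E : {set {set V}}) (d : nat) :
  simple_graph E -> M_connected d E ->
  forall d' : nat, (1 <= d')%N -> (d' <= d)%N -> M_connected d' E.
Proof.
(* the edge set need not come from a simple graph *)
move=> _ connE d' d'0 d'd e f eE fE ef.
have [C [rcC [eC fC]]] := connE e f eE fE ef; have [CE depC _] := rcC.
(* [rig_indep] would hold vacuously without generic realizations *)
have [p gp] : exists p : V -> 'I_d -> R, generic p.
  by apply: contrapT => none; apply: depC => p gp; case: none; exists p.
have [_ cC] := (rig_circuitE _ _ gp).1 rcC.
have [c hc suppC] := circuit_linrel cC.
apply: contrapT => none; pose A := component d' E C e.
have eA : e \in A by rewrite inE eC; apply/asboolP; left.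
have AC : A \proper C.
  rewrite properE; apply/andP; split; first by apply/subsetP => g; rewrite inE => /andP [].
  apply/subsetPn; exists f => //; rewrite inE fC; apply/asboolP => -[fe | [D rcD [_ eD fD]]].
    by rewrite fe eqxx in ef.
  by apply: none; exists D.
have hcA : linrel (rig_rows p) (restr A c).
  by apply: linrel_restr_component d'0 d'd gp CE hc _; rewrite suppC.
have := (indepP _ _).1 (cC.2 A AC) _ hcA.
rewrite supp_restr subsetIr => /(_ isT) /setP /(_ e).
by rewrite in_set0 inE eA suppC eC.
Qed.
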